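(* Fix $p,r\in(0,1/36)$ with $\log p/\log r$ irrational, and let $h=1/2$, $a=1/3$. For $q\in(0,1/36)$ let $\mathcal S_q=\{S_1,\dots,S_6\}$ be the system on $\mathbb R$ given by $S_1(x)=px$, $S_2(x)=a+rx$, $S_3(x)=h-qx$, $S_4(x)=h-r+rx$, $S_5(x)=1-a-rx$, $S_6(x)=1-r+rx$, with attractor $K=K(q)$ and pieces $K_i=S_i(K)$. Then for Lebesgue almost all $q\in(0,1/36)$: $K_3\cap K_4=\{1/2\}$, $K_i\cap K_j=\varnothing$ for all other pairs $i\ne j$, and $\mathcal S_q$ does not satisfy the Weak Separation Property.
   Context: The attractor $K$ is the unique nonempty compact set with $K=\bigcup_{i=1}^6S_i(K)$. For a system $\{S_1,\dots,S_m\}$ of contracting similarities of $\mathbb R$, let $\mathcal F=\{S_{\mathbf i}^{-1}S_{\mathbf j}:\mathbf i,\mathbf j\in I^*\}$, where $I^*$ is the set of finite words over $\{1,\dots,m\}$ and $S_{j_1\dots j_k}=S_{j_1}\circ\dots\circ S_{j_k}$; the system satisfies the Weak Separation Property if $\mathrm{Id}\notin\overline{\mathcal F\setminus\{\mathrm{Id}\}}$, the closure taken in the space of affine maps of $\mathbb R$ with the topology of convergence of coefficients. *)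

From Stdlib Require Import Reals Lra List ZArith.
Import ListNotations.
From Stdlib Require Export Rtopology.
Open Scope R_scope.

Definition aff := (R * R)%type.
Definition app (f : aff) (x : R) : R := fst f * x + snd f.
Definition idA : aff := (1, 0).
Definition comp (f g : aff) : aff := (fst f * fst g, fst f * snd g + snd f).
Definition invA (f : aff) : aff := (/ fst f, - (snd f / fst f)).

(* S_{j1...jk} = S_{j1} o ... o S_{jk}; a word is the list of its letters (maps of the system). *)
Definition word_map (w : list aff) : aff := fold_right comp idA w.

Definition is_word (S : list aff) (w : list aff) : Prop := Forall (fun g => In g S) w.

Definition in_F (S : list aff) (f : aff) : Prop :=
  exists wi wj, is_word S wi /\ is_word S wj /\ f = comp (invA (word_map wi)) (word_map wj).

(* Weak Separation Property: Id is not in the closure of F \ {Id}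
   (topology of convergence of coefficients). *)
Definition WSP (S : list aff) : Prop :=
  ~ (forall eps, 0 < eps ->
       exists f, in_F S f /\ f <> idA /\ Rabs (fst f - 1) < eps /\ Rabs (snd f) < eps).

Definition image (g : aff) (K : R -> Prop) : R -> Prop :=
  fun y => exists x, K x /\ y = app g x.

Definition is_attractor (S : list aff) (K : R -> Prop) : Prop :=
  compact K /\ (exists x, K x) /\
  (forall y, K y <-> exists g, In g S /\ image g K y).

Definition lebesgue_null (E : R -> Prop) : Prop :=
  forall eps, 0 < eps ->
    exists a b : nat -> R,
      (forall n, a n <= b n) /\
      (forall N, sum_f_R0 (fun n => b n - a n) N <= eps) /\
      (forall x, E x -> exists n, a n < x < b n).

Definition ae_on (lo hi : R) (P : R -> Prop) : Prop :=
  lebesgue_null (fun q => lo < q < hi /\ ~ P q).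

Definition hh : R := 1/2.
Definition aa : R := 1/3.

(* The system S_q = {S_1,...,S_6} (list positions 0..5 correspond to S_1..S_6) *)
Definition sysS (p r q : R) : list aff :=
  [ (p, 0);
    (r, aa);
    (- q, hh);
    (r, hh - r);
    (- r, 1 - aa);
    (r, 1 - r) ]%list.

Definition piece (S : list aff) (K : R -> Prop) (i : nat) : R -> Prop :=
  image (nth i S idA) K.

(* The attractor lies in [0,1] and contains 0 and 1, so the six pieces lie in pairwise disjoint
   intervals, except that S_3 0 = S_4 1 = 1/2.
   WSP fails for every q: S_3 S_1^n S_2 and S_4 S_6^m S_5 have slopes s = -q p^n r and s = -r^(m+2)
   and both map 0 to 1/2 + a s / r, so the relative map is x |-> t x + (t - 1)/(3r) with
   t = r^(m+1)/(q p^n). As log p / log r is irrational, the numbers n log(1/p) - m log(1/r) are dense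
   in R, hence t can be taken arbitrarily close to 1.
   A second common point of K_3 and K_4 forces q p^n x = r^(m+1) u with x, 1 - u in K and
   x, u in [1/3, 1]. Approximating x and 1 - u by points coded by words of length k, which move
   2-Lipschitz in q, the quantity q p^n C_w(q) - r^(m+1) (1 - C_w'(q)) is O(c^k) there, while it
   increases at rate >= p^n/12 in q. So for fixed n, m the exceptional q lie in 36^k windows of
   length O(c^k) with 36 c < 1, and the countable union over n, m is Lebesgue null. *)

From Stdlib Require Import Reals List ZArith Lra Lia ClassicalEpsilon Classical Rtopology Cantor.
Import ListNotations.
Open Scope R_scope.

Lemma Rabs_le_inv x a : Rabs x <= a -> - a <= x <= a.
Proof.
  intros H. pose proof (Rle_abs x). pose proof (Rle_abs (- x)). rewrite Rabs_Ropp in *. lra.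
Qed.

Lemma nat_floor x : 0 <= x -> exists k : nat, INR k <= x < INR k + 1.
Proof.
  intros Hx. destruct (archimed x) as [H1 H2].
  assert (Hz : (0 < up x)%Z) by (apply lt_0_IZR; lra).
  exists (Z.to_nat (up x - 1)). rewrite INR_IZR_INZ, Z2Nat.id by lia.
  rewrite minus_IZR. simpl. lra.
Qed.

Lemma pow_eventually_lt c y : 0 <= c < 1 -> 0 < y -> exists N, c ^ N < y.
Proof.
  intros Hc Hy. destruct (pow_lt_1_zero c ltac:(rewrite Rabs_pos_eq; lra) y Hy) as [N HN].
  exists N. specialize (HN N (le_n _)). rewrite Rabs_pos_eq in HN by (apply pow_le; lra). exact HN.
Qed.

Lemma pow_le_one x k : 0 <= x <= 1 -> x ^ k <= 1.
Proof. intros H. induction k; simpl; [lra|]. pose proof (pow_le x k ltac:(lra)). nra. Qed.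

Lemma le_of_shrinking_bound e c y b : 0 <= c < 1 -> (forall k, y <= b + e * c ^ k) -> y <= b.
Proof.
  intros Hc H. destruct (Rle_or_lt y b) as [|Hlt]; [assumption|exfalso].
  destruct (pow_eventually_lt c ((y - b) / (Rabs e + 1)) Hc) as [N HN].
  { apply Rdiv_lt_0_compat; pose proof (Rabs_pos e); lra. }
  specialize (H N). pose proof (Rle_abs e). pose proof (Rabs_pos e).
  pose proof (pow_le c N ltac:(lra)).
  apply (Rmult_lt_compat_r (Rabs e + 1)) in HN; [|lra].
  unfold Rdiv in HN. rewrite Rmult_assoc, Rinv_l, Rmult_1_r in HN by lra. nra.
Qed.

Lemma geometric_descent (P : R -> Prop) c b x : 0 < c < 1 -> 0 < b ->
  (forall y, P y -> y < b -> exists z, P z /\ y = c * z) -> P x -> 0 < x ->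
  exists n z, P z /\ x = c ^ n * z /\ b <= z.
Proof.
  intros Hc Hb Hstep Hx Hx0.
  destruct (pow_eventually_lt c (x / b) ltac:(lra) ltac:(apply Rdiv_lt_0_compat; lra)) as [N HN].
  assert (HNx : b * c ^ N <= x).
  { apply (Rmult_lt_compat_l b) in HN; [|lra].
    replace (b * (x / b)) with x in HN by (field; lra). lra. }
  clear HN Hx0. revert x Hx HNx. induction N as [|N IH]; intros x Hx HNx.
  - exists 0%nat, x. simpl in *. repeat split; auto; lra.
  - destruct (Rle_or_lt b x) as [Hbx|Hxb].
    + exists 0%nat, x. simpl. repeat split; auto; ring.
    + destruct (Hstep x Hx Hxb) as [z [Hz ->]].
      destruct (IH z Hz) as [n [z' [Hz' [-> Hbz']]]].
      { simpl in HNx. pose proof (pow_le c N ltac:(lra)). nra. }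
      exists (S n), z'. simpl. repeat split; auto; ring.
Qed.

Lemma closed_set_adherent K x :
  closed_set K -> (forall d, 0 < d -> exists y, K y /\ Rabs (y - x) < d) -> K x.
Proof.
  intros HC H. apply NNPP. intro Hn.
  destruct (HC x Hn) as [del Hd]. destruct (H del (cond_pos del)) as [y [Hy Hyd]].
  exact (Hd y Hyd Hy).
Qed.

Lemma app_idA x : app idA x = x.
Proof. unfold app, idA; simpl; ring. Qed.

Lemma app_sub f x y : app f x - app f y = fst f * (x - y).
Proof. unfold app; ring. Qed.

Lemma app_comp f g x : app (comp f g) x = app f (app g x).
Proof. unfold app, comp; simpl; ring. Qed.

Lemma comp_assoc f g h : comp f (comp g h) = comp (comp f g) h.
Proof. unfold comp; simpl; f_equal; ring. Qed.

Lemma word_map_app l1 l2 : word_map (l1 ++ l2) = comp (word_map l1) (word_map l2).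
Proof.
  induction l1 as [|f l1 IH]; simpl.
  - unfold comp, idA; simpl. destruct (word_map l2); simpl; f_equal; ring.
  - rewrite IH. apply comp_assoc.
Qed.

Lemma word_map_repeat_S1 p n : word_map (repeat (p, 0) n) = (p ^ n, 0).
Proof. induction n as [|n IH]; simpl; [reflexivity|]. rewrite IH. unfold comp; simpl; f_equal; ring. Qed.

Lemma word_map_repeat_S6 r n : word_map (repeat (r, 1 - r) n) = (r ^ n, 1 - r ^ n).
Proof.
  induction n as [|n IH]; simpl; [unfold idA; f_equal; ring|].
  rewrite IH. unfold comp; simpl; f_equal; ring.
Qed.

Definition sys_map p r q i : aff := nth i (sysS p r q) idA.

Ltac case_six i := destruct i as [|[|[|[|[|[|i]]]]]]; [..|exfalso; lia].

Lemma sys_map_In p r q i : (i < 6)%nat -> In (sys_map p r q i) (sysS p r q).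
Proof. intro Hi. now apply nth_In. Qed.

Lemma In_sysS p r q g : In g (sysS p r q) -> exists i, (i < 6)%nat /\ g = sys_map p r q i.
Proof. intro H. destruct (In_nth _ _ idA H) as [i [Hi <-]]. now exists i. Qed.

Lemma sys_map_shrinks p r q i e x : 0 < p < 1/36 -> 0 < r < 1/36 -> 0 <= q <= 1/36 ->
  (i < 6)%nat -> 0 <= e -> - e <= x <= 1 + e -> - (e / 36) <= app (sys_map p r q i) x <= 1 + e / 36.
Proof.
  intros Hp Hr Hq Hi He Hx. unfold sys_map, app. case_six i; simpl; unfold aa, hh; split; nra.
Qed.

Definition coding_map p r q (w : list nat) : aff :=
  fold_right (fun i f => comp (sys_map p r q i) f) idA w.

Definition word_point p r q w := app (coding_map p r q w) 0.

Fixpoint words (k : nat) : list (list nat) :=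
  match k with
  | O => [[]]
  | S k => flat_map (fun w => map (fun i => i :: w) (seq 0 6)) (words k)
  end.

Lemma words_length k : length (words k) = (6 ^ k)%nat.
Proof.
  induction k as [|k IH]; simpl; [reflexivity|].
  assert (H : forall l : list (list nat),
    length (flat_map (fun w => map (fun i => i :: w) (seq 0 6)) l) = (6 * length l)%nat).
  { induction l as [|w l IHl]; simpl in *; [reflexivity|]. rewrite IHl. lia. }
  rewrite H, IH. lia.
Qed.

Lemma In_words k w : length w = k -> Forall (fun i => (i < 6)%nat) w -> In w (words k).
Proof.
  revert w. induction k as [|k IH]; intros w Hl Hw.
  - destruct w; [now left | discriminate].
  - destruct w as [|i w]; [discriminate|]. inversion Hw; subst. simpl.
    apply in_flat_map. exists w. split; [apply IH; [simpl in Hl; lia | assumption]|].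
    case_six i; simpl; tauto.
Qed.

Lemma sys_map_overflow p r q i : (6 <= i)%nat -> sys_map p r q i = idA.
Proof. intro Hi. now apply nth_overflow. Qed.

Lemma coding_map_in_unit p r q w z : 0 <= p <= 1/36 -> 0 <= r <= 1/36 -> 0 <= q <= 1/36 ->
  0 <= z <= 1 -> 0 <= app (coding_map p r q w) z <= 1.
Proof.
  intros Hp Hr Hq Hz. induction w as [|i w IH]; simpl; [unfold app, idA; simpl; lra|].
  rewrite app_comp. destruct (Nat.lt_ge_cases i 6) as [Hi|Hi].
  - unfold sys_map, app in *. case_six i; simpl; unfold aa, hh; split; nra.
  - now rewrite sys_map_overflow, app_idA.
Qed.

Lemma coding_map_slope p r q c w : 0 < p <= c -> 0 < r <= c -> 0 <= q <= c ->
  Forall (fun i => (i < 6)%nat) w -> Rabs (fst (coding_map p r q w)) <= c ^ length w.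
Proof.
  intros Hp Hr Hq Hw. induction Hw as [|i w Hi Hw IH]; simpl; [rewrite Rabs_R1; lra|].
  rewrite Rabs_mult. apply Rmult_le_compat; try apply Rabs_pos; [|exact IH].
  unfold sys_map. case_six i; simpl; rewrite ?Rabs_Ropp, Rabs_pos_eq; lra.
Qed.

Lemma sys_map_lipschitz p r q1 q2 i a1 a2 : 0 <= p <= 1/36 -> 0 <= r <= 1/36 ->
  0 <= q1 <= 1/36 -> 0 <= a1 <= 1 -> 0 <= a2 <= 1 -> (i < 6)%nat ->
  Rabs (app (sys_map p r q2 i) a2 - app (sys_map p r q1 i) a1)
    <= Rabs (q2 - q1) + Rabs (a2 - a1) / 36.
Proof.
  intros Hp Hr Hq1 Ha1 Ha2 Hi. pose proof (Rabs_pos (q2 - q1)). pose proof (Rabs_pos (a2 - a1)).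
  assert (Hslope : forall s, Rabs s <= 1/36 -> Rabs (s * (a2 - a1)) <= Rabs (a2 - a1) / 36).
  { intros s Hs. rewrite Rabs_mult. pose proof (Rabs_pos s). nra. }
  assert (Hsame : forall s b, Rabs s <= 1/36 ->
    Rabs (s * a2 + b - (s * a1 + b)) <= Rabs (q2 - q1) + Rabs (a2 - a1) / 36).
  { intros s b Hs. replace (s * a2 + b - (s * a1 + b)) with (s * (a2 - a1)) by ring.
    pose proof (Hslope s Hs). lra. }
  unfold sys_map, app. case_six i; simpl.
  all: try (apply Hsame; rewrite ?Rabs_Ropp, Rabs_pos_eq; lra).
  replace (- q2 * a2 + hh - (- q1 * a1 + hh)) with (- ((q2 - q1) * a2) + - q1 * (a2 - a1)) by ring.
  eapply Rle_trans; [apply Rabs_triang|]. rewrite Rabs_Ropp, Rabs_mult, (Rabs_pos_eq a2) by lra.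
  pose proof (Hslope (- q1) ltac:(rewrite Rabs_Ropp, Rabs_pos_eq; lra)). nra.
Qed.

Lemma word_point_lipschitz p r q1 q2 w : 0 <= p <= 1/36 -> 0 <= r <= 1/36 ->
  0 <= q1 <= 1/36 -> 0 <= q2 <= 1/36 ->
  Rabs (word_point p r q2 w - word_point p r q1 w) <= 2 * Rabs (q2 - q1).
Proof.
  intros Hp Hr Hq1 Hq2. unfold word_point. induction w as [|i w IH]; simpl.
  - rewrite Rminus_diag, Rabs_R0. pose proof (Rabs_pos (q2 - q1)). lra.
  - rewrite !app_comp. destruct (Nat.lt_ge_cases i 6) as [Hi|Hi].
    + pose proof (coding_map_in_unit p r q1 w 0 Hp Hr Hq1 ltac:(lra)).
      pose proof (coding_map_in_unit p r q2 w 0 Hp Hr Hq2 ltac:(lra)).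
      eapply Rle_trans; [apply sys_map_lipschitz; auto|]. pose proof (Rabs_pos (q2 - q1)). lra.
    + now rewrite !sys_map_overflow, !app_idA.
Qed.

Section Attractor.
Variables p r q : R.
Hypothesis Hp : 0 < p < 1/36.
Hypothesis Hr : 0 < r < 1/36.
Hypothesis Hq : 0 < q < 1/36.
Variable K : R -> Prop.
Hypothesis HK : is_attractor (sysS p r q) K.

Lemma attractor_preimage y : K y ->
  exists i z, (i < 6)%nat /\ K z /\ y = app (sys_map p r q i) z.
Proof.
  intros Hy. destruct HK as [_ [_ HKeq]]. apply HKeq in Hy.
  destruct Hy as [g [Hg [z [Hz ->]]]]. destruct (In_sysS _ _ _ _ Hg) as [i [Hi ->]]. eauto.
Qed.

Lemma attractor_image i z : (i < 6)%nat -> K z -> K (app (sys_map p r q i) z).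
Proof.
  intros Hi Hz. destruct HK as [_ [_ HKeq]]. apply HKeq.
  exists (sys_map p r q i). split; [now apply sys_map_In | now exists z].
Qed.

Lemma attractor_in_unit y : K y -> 0 <= y <= 1.
Proof.
  destruct (compact_P1 _ (proj1 HK)) as [m [M HmM]].
  set (e := Rabs m + Rabs M).
  assert (He : 0 <= e) by (pose proof (Rabs_pos m); pose proof (Rabs_pos M); unfold e; lra).
  assert (Hbound : forall k y, K y -> - (e * (/36) ^ k) <= y <= 1 + e * (/36) ^ k).
  { induction k as [|k IH]; intros x Hx.
    - destruct (HmM x Hx). pose proof (Rle_abs M). pose proof (Rle_abs (- m)).
      rewrite Rabs_Ropp in *. unfold e. simpl. pose proof (Rabs_pos m); pose proof (Rabs_pos M); lra.
    - destruct (attractor_preimage x Hx) as [i [z [Hi [Hz ->]]]].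
      specialize (IH z Hz). assert (0 <= e * (/36) ^ k) by (apply Rmult_le_pos; [lra | apply pow_le; lra]).
      replace (e * (/ 36) ^ S k) with (e * (/ 36) ^ k / 36) by (simpl; field).
      apply sys_map_shrinks; auto; lra. }
  intros Hy. split.
  - assert (H : - y <= 0) by
      (apply (le_of_shrinking_bound e (/36)); [lra | intro k; specialize (Hbound k y Hy); lra]).
    lra.
  - apply (le_of_shrinking_bound e (/36)); [lra | intro k; apply Hbound, Hy].
Qed.

Lemma attractor_0_1 : K 0 /\ K 1.
Proof.
  pose proof (compact_P2 _ (proj1 HK)) as Hclosed. destruct HK as [_ [[y0 Hy0] _]].
  pose proof (attractor_in_unit y0 Hy0) as Hy0'.
  split; apply closed_set_adherent; auto; intros d Hd.
  - assert (Hn : forall n, K (p ^ n * y0)).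
    { induction n as [|n IH]; [simpl; now rewrite Rmult_1_l|].
      replace (p ^ S n * y0) with (app (sys_map p r q 0) (p ^ n * y0)) by (unfold app; simpl; ring).
      now apply attractor_image; [lia|]. }
    destruct (pow_eventually_lt p d ltac:(lra) Hd) as [N HN].
    exists (p ^ N * y0). split; [apply Hn|].
    rewrite Rminus_0_r, Rabs_pos_eq by (pose proof (pow_le p N ltac:(lra)); nra).
    pose proof (pow_le p N ltac:(lra)). nra.
  - assert (Hn : forall n, K (1 - r ^ n * (1 - y0))).
    { induction n as [|n IH]; [simpl; now replace (1 - 1 * (1 - y0)) with y0 by ring|].
      replace (1 - r ^ S n * (1 - y0)) with (app (sys_map p r q 5) (1 - r ^ n * (1 - y0)))
        by (unfold app; simpl; ring).
      now apply attractor_image; [lia|]. }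
    destruct (pow_eventually_lt r d ltac:(lra) Hd) as [N HN].
    exists (1 - r ^ N * (1 - y0)). split; [apply Hn|].
    replace (1 - r ^ N * (1 - y0) - 1) with (- (r ^ N * (1 - y0))) by ring.
    rewrite Rabs_Ropp, Rabs_pos_eq by (pose proof (pow_le r N ltac:(lra)); nra).
    pose proof (pow_le r N ltac:(lra)). nra.
Qed.

Lemma half_in_pieces_3_4 : piece (sysS p r q) K 2 (1/2) /\ piece (sysS p r q) K 3 (1/2).
Proof.
  destruct attractor_0_1 as [H0 H1].
  split; [exists 0 | exists 1]; split; auto; simpl; unfold app, hh; simpl; lra.
Qed.

Lemma pieces_disjoint i j : (i < 6)%nat -> (j < 6)%nat -> i <> j ->
  ~ ((i = 2%nat /\ j = 3%nat) \/ (i = 3%nat /\ j = 2%nat)) ->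
  forall y, ~ (piece (sysS p r q) K i y /\ piece (sysS p r q) K j y).
Proof.
  intros Hi Hj Hij Hn y [[x1 [Hx1 E1]] [x2 [Hx2 E2]]].
  pose proof (attractor_in_unit x1 Hx1). pose proof (attractor_in_unit x2 Hx2).
  case_six i; case_six j; simpl in E1, E2; unfold app, aa, hh in E1, E2; simpl in E1, E2;
    solve [ apply Hij; reflexivity | apply Hn; tauto | nra ].
Qed.

Lemma attractor_near_0 x : K x -> x < 1/3 -> exists z, K z /\ x = p * z.
Proof.
  intros Hx Hlt. destruct (attractor_preimage x Hx) as [i [z [Hi [Hz ->]]]].
  pose proof (attractor_in_unit z Hz).
  exists z. split; auto. unfold sys_map, app in *.
  case_six i; simpl in *; unfold aa, hh in *; [ring | exfalso; nra ..].
Qed.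

Lemma attractor_near_1 x : K x -> 1 - x < 1/3 -> exists z, K z /\ 1 - x = r * (1 - z).
Proof.
  intros Hx Hlt. destruct (attractor_preimage x Hx) as [i [z [Hi [Hz ->]]]].
  pose proof (attractor_in_unit z Hz).
  exists z. split; auto. unfold sys_map, app in *.
  case_six i; simpl in *; unfold aa, hh in *; [exfalso; nra .. | ring].
Qed.

Lemma pieces_3_4_other_point y : piece (sysS p r q) K 2 y -> piece (sysS p r q) K 3 y -> y <> 1/2 ->
  exists n m x u, 1/3 <= x <= 1 /\ 1/3 <= u <= 1 /\ q * p ^ n * x = r ^ (m + 1) * u /\
    K x /\ K (1 - u).
Proof.
  intros [x0 [Hx0 Ey]] [u0 [Hu0 Ey']] Hy. simpl in Ey, Ey'. unfold app, hh in Ey, Ey'; simpl in Ey, Ey'.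
  pose proof (attractor_in_unit x0 Hx0). pose proof (attractor_in_unit u0 Hu0).
  destruct (geometric_descent K p (1/3) x0) as [n [x [Hx [Ex Hx3]]]]; auto; try lra.
  { exact attractor_near_0. }
  { assert (x0 <> 0) by (intros ->; lra). lra. }
  destruct (geometric_descent (fun v => K (1 - v)) r (1/3) (1 - u0)) as [m [u [Hu [Eu Hu3]]]];
    auto; try lra.
  { intros v Hv Hlt. destruct (attractor_near_1 (1 - v) Hv ltac:(lra)) as [z [Hz Ez]].
    exists (1 - z). replace (1 - (1 - z)) with z by ring. split; auto; lra. }
  { replace (1 - (1 - u0)) with u0 by ring; exact Hu0. }
  { assert (u0 <> 1) by (intros ->; lra). lra. }
  pose proof (attractor_in_unit x Hx). pose proof (attractor_in_unit (1 - u) Hu).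
  exists n, m, x, u. repeat split; auto; try lra.
  rewrite pow_add, Rmult_assoc, <- Ex. simpl. nra.
Qed.

Lemma attractor_coding k x : K x -> exists w z, length w = k /\ Forall (fun i => (i < 6)%nat) w /\
  K z /\ x = app (coding_map p r q w) z.
Proof.
  revert x. induction k as [|k IH]; intros x Hx.
  - exists [], x. repeat split; auto. now rewrite app_idA.
  - destruct (attractor_preimage x Hx) as [i [z1 [Hi [Hz1 ->]]]].
    destruct (IH z1 Hz1) as [w [z [Hl [Hw [Hz ->]]]]].
    exists (i :: w), z. repeat split; auto; simpl; [now rewrite Hl | now rewrite app_comp].
Qed.

Lemma attractor_near_word_point c k x : p <= c -> r <= c -> q <= c -> K x ->
  exists w, In w (words k) /\ Rabs (x - word_point p r q w) <= c ^ k.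
Proof.
  intros Hpc Hrc Hqc Hx.
  destruct (attractor_coding k x Hx) as [w [z [Hl [Hw [Hz ->]]]]].
  exists w. split; [now apply In_words|].
  unfold word_point. rewrite app_sub, Rminus_0_r, Rabs_mult.
  pose proof (attractor_in_unit z Hz). rewrite (Rabs_pos_eq z) by lra.
  pose proof (coding_map_slope p r q c w ltac:(lra) ltac:(lra) ltac:(lra) Hw) as Hslope.
  rewrite Hl in Hslope. pose proof (Rabs_pos (fst (coding_map p r q w))). nra.
Qed.

End Attractor.

Section Density.
Variables al be : R.
Hypothesis Hal : 0 < al.
Hypothesis Hbe : 0 < be.
Hypothesis Hindep : forall n j : nat, INR n * al = INR j * be -> n = 0%nat /\ j = 0%nat.

Definition is_nat_comb x := exists n j : nat, x = INR n * al - INR j * be.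

Lemma nat_comb_add x y : is_nat_comb x -> is_nat_comb y -> is_nat_comb (x + y).
Proof.
  intros [n [j ->]] [n' [j' ->]]. exists (n + n')%nat, (j + j')%nat. rewrite !plus_INR. ring.
Qed.

Lemma nat_comb_scale k x : is_nat_comb x -> is_nat_comb (INR k * x).
Proof. intros [n [j ->]]. exists (k * n)%nat, (k * j)%nat. rewrite !mult_INR. ring. Qed.

Lemma nat_comb_neq0 n j : (0 < n)%nat -> INR n * al - INR j * be <> 0.
Proof. intros Hn E. destruct (Hindep n j ltac:(lra)). lia. Qed.

(* Euclid's algorithm on a positive element u and a negative element -v: replacing the larger
   of u, v by the difference shrinks u + v by at least eps as long as both stay >= eps. *)
Lemma nat_comb_small eps : 0 < eps ->
  (exists x, is_nat_comb x /\ 0 < x < eps) \/ (exists x, is_nat_comb x /\ - eps < x < 0).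
Proof.
  intros He. apply NNPP. intros [HA HB]%not_or_and.
  assert (Hs : forall N : nat, exists n j n' j' : nat,
     0 < INR n * al - INR j * be /\ 0 < INR j' * be - INR n' * al /\
     (INR n * al - INR j * be) + (INR j' * be - INR n' * al) <= al + be - INR N * eps).
  { induction N as [|N IH].
    - exists 1%nat, 0%nat, 0%nat, 1%nat. simpl. lra.
    - destruct IH as [n [j [n' [j' [Hu [Hv Hsum]]]]]].
      set (u := INR n * al - INR j * be) in *. set (v := INR j' * be - INR n' * al) in *.
      assert (Hue : eps <= u).
      { apply Rnot_lt_le. intro. apply HA. exists u. split; [exists n, j|]; auto; lra. }
      assert (Hve : eps <= v).
      { apply Rnot_lt_le. intro. apply HB. exists (- v). split; [exists n', j'; unfold v; ring | lra]. }
      assert (Huv : u <> v).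
      { intro E. apply (nat_comb_neq0 (n + n') (j + j')).
        - destruct n; [unfold u in Hu; simpl in Hu; pose proof (pos_INR j); nra | lia].
        - rewrite !plus_INR. unfold u, v in E. lra. }
      rewrite S_INR. destruct (Rlt_or_le v u).
      + exists (n + n')%nat, (j + j')%nat, n', j'. rewrite !plus_INR. unfold u, v in *. repeat split; lra.
      + exists n, j, (n + n')%nat, (j + j')%nat. rewrite !plus_INR. unfold u, v in *. repeat split; lra. }
  destruct (nat_floor ((al + be) / eps)) as [N [_ HN]].
  { apply Rlt_le, Rdiv_lt_0_compat; lra. }
  destruct (Hs (N + 1)%nat) as [n [j [n' [j' [Hu [Hv Hsum]]]]]].
  rewrite plus_INR in Hsum. simpl in Hsum.
  apply (Rmult_lt_compat_r eps) in HN; [|lra].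
  replace ((al + be) / eps * eps) with (al + be) in HN by (field; lra). lra.
Qed.

Lemma nat_comb_small_pos eps : 0 < eps -> exists x, is_nat_comb x /\ 0 < x < eps.
Proof.
  intros He. destruct (nat_comb_small eps He) as [H | [d [[n [j Hd]] Hdr]]]; [exact H|].
  destruct (nat_floor (al / - d)) as [k [Hk1 Hk2]].
  { apply Rlt_le, Rdiv_lt_0_compat; lra. }
  apply (Rmult_le_compat_r (- d)) in Hk1; [|lra]. apply (Rmult_lt_compat_r (- d)) in Hk2; [|lra].
  replace (al / - d * - d) with al in Hk1, Hk2 by (field; lra).
  exists (al + INR k * d). split.
  - apply nat_comb_add; [exists 1%nat, 0%nat; simpl; ring | apply nat_comb_scale; now exists n, j].
  - assert (al + INR k * d <> 0).
    { rewrite Hd. replace (al + INR k * (INR n * al - INR j * be))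
        with (INR (1 + k * n) * al - INR (k * j) * be) by (rewrite plus_INR, !mult_INR; simpl; ring).
      apply nat_comb_neq0. lia. }
    split; [|nra]. destruct (Rle_lt_or_eq_dec 0 (al + INR k * d)); [nra | auto | congruence].
Qed.

Lemma nat_comb_dense_pos y d : 0 <= y -> 0 < d -> exists x, is_nat_comb x /\ y < x < y + d.
Proof.
  intros Hy Hd. destruct (nat_comb_small_pos d Hd) as [e [He [He1 He2]]].
  destruct (nat_floor (y / e)) as [k [Hk1 Hk2]].
  { apply Rmult_le_pos; [lra | apply Rlt_le, Rinv_0_lt_compat; lra]. }
  apply (Rmult_le_compat_r e) in Hk1; [|lra]. apply (Rmult_lt_compat_r e) in Hk2; [|lra].
  replace (y / e * e) with y in Hk1, Hk2 by (field; lra).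
  exists (INR (k + 1) * e). split; [now apply nat_comb_scale|].
  rewrite plus_INR; simpl. nra.
Qed.

Lemma nat_comb_dense y d : 0 < d -> exists x, is_nat_comb x /\ y < x < y + d.
Proof.
  intros Hd. destruct (nat_floor (Rabs y / be)) as [k [_ Hk]].
  { apply Rmult_le_pos; [apply Rabs_pos | apply Rlt_le, Rinv_0_lt_compat; lra]. }
  apply (Rmult_lt_compat_r be) in Hk; [|lra].
  replace (Rabs y / be * be) with (Rabs y) in Hk by (field; lra).
  pose proof (Rle_abs (- y)). rewrite Rabs_Ropp in *.
  destruct (nat_comb_dense_pos (y + INR (k + 1) * be) d) as [x [Hx Hxy]]; auto.
  { rewrite plus_INR; simpl. lra. }
  exists (x - INR (k + 1) * be). split; [|lra].
  unfold Rminus. apply nat_comb_add; auto. exists 0%nat, (k + 1)%nat. simpl. ring.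
Qed.

End Density.

Definition word_S3_S1pow_S2 p r q n : list aff := (- q, hh) :: repeat (p, 0) n ++ [(r, aa)].
Definition word_S4_S6pow_S5 r m : list aff := (r, hh - r) :: repeat (r, 1 - r) m ++ [(- r, 1 - aa)].

Lemma word_S3_S1pow_S2_is_word p r q n : is_word (sysS p r q) (word_S3_S1pow_S2 p r q n).
Proof.
  constructor; [simpl; tauto|]. apply Forall_app. split.
  - apply Forall_forall. intros g Hg. apply repeat_spec in Hg. subst. simpl; tauto.
  - constructor; [simpl; tauto | constructor].
Qed.

Lemma word_S4_S6pow_S5_is_word p r q m : is_word (sysS p r q) (word_S4_S6pow_S5 r m).
Proof.
  constructor; [simpl; tauto|]. apply Forall_app. split.
  - apply Forall_forall. intros g Hg. apply repeat_spec in Hg. subst. simpl; tauto.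
  - constructor; [simpl; tauto | constructor].
Qed.

Lemma relative_map_S3_S1pow_S2_S4_S6pow_S5 p r q n m : 0 < p -> 0 < r -> 0 < q ->
  let t := r ^ (m + 1) / (q * p ^ n) in
  comp (invA (word_map (word_S3_S1pow_S2 p r q n))) (word_map (word_S4_S6pow_S5 r m))
  = (t, (t - 1) / (3 * r)).
Proof.
  intros Hp Hr Hq t. assert (0 < p ^ n) by (apply pow_lt; lra).
  unfold word_S3_S1pow_S2, word_S4_S6pow_S5. simpl word_map at 1. simpl word_map at 2.
  rewrite !word_map_app, word_map_repeat_S1, word_map_repeat_S6.
  unfold comp, invA, idA, t, hh, aa; simpl. rewrite pow_add. simpl.
  f_equal; field; repeat split; lra.
Qed.

Lemma ln_lt_0 x : 0 < x < 1 -> ln x < 0.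
Proof. intros Hx. rewrite <- ln_1. apply ln_increasing; lra. Qed.

Lemma ratio_near_one p r q eta : 0 < p < 1 -> 0 < r < 1 -> 0 < q -> 0 < eta ->
  (forall n j : nat, INR n * - ln p = INR j * - ln r -> n = 0%nat /\ j = 0%nat) ->
  exists n m : nat, 1 < r ^ (m + 1) / (q * p ^ n) < 1 + eta.
Proof.
  intros Hp Hr Hq Heta Hindep.
  pose proof (ln_lt_0 p Hp). pose proof (ln_lt_0 r Hr).
  assert (Hl : 0 < ln (1 + eta)) by (rewrite <- ln_1; apply ln_increasing; lra).
  destruct (nat_comb_dense (- ln p) (- ln r) ltac:(lra) ltac:(lra) Hindep (ln q - ln r) (ln (1 + eta)) Hl)
    as [x [[n [m Hx]] Hxb]].
  exists n, m. set (t := r ^ (m + 1) / (q * p ^ n)).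
  assert (Hpn : 0 < p ^ n) by (apply pow_lt; lra).
  assert (Ht : 0 < t) by (apply Rdiv_lt_0_compat; [apply pow_lt |]; nra).
  assert (Hlt : ln t = x + ln r - ln q).
  { unfold t, Rdiv.
    rewrite ln_mult, ln_Rinv, ln_mult, !ln_pow
      by (try apply Rinv_0_lt_compat; try apply pow_lt; nra).
    rewrite Hx, plus_INR. simpl. ring. }
  split.
  - apply ln_lt_inv; [lra | lra | rewrite ln_1; lra].
  - apply ln_lt_inv; lra.
Qed.

Lemma indep_of_irrational_ratio p r : 0 < p < 1 -> 0 < r < 1 ->
  ~ (exists m n : Z, n <> 0%Z /\ ln p / ln r = IZR m / IZR n) ->
  forall n j : nat, INR n * - ln p = INR j * - ln r -> n = 0%nat /\ j = 0%nat.
Proof.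
  intros Hp Hr Hirr n j E. pose proof (ln_lt_0 p Hp). pose proof (ln_lt_0 r Hr).
  destruct n as [|n].
  - simpl in E. assert (INR j = 0) by nra. split; [reflexivity | now apply INR_eq].
  - exfalso. apply Hirr. exists (Z.of_nat j), (Z.of_nat (S n)). split; [lia|].
    rewrite <- !INR_IZR_INZ. pose proof (pos_INR n). rewrite S_INR in *.
    field_simplify_eq; [lra | split; lra].
Qed.

Lemma not_WSP p r q : 0 < p < 1 -> 0 < r < 1 -> 0 < q ->
  ~ (exists m n : Z, n <> 0%Z /\ ln p / ln r = IZR m / IZR n) ->
  ~ WSP (sysS p r q).
Proof.
  intros Hp Hr Hq Hirr HWSP. apply HWSP. intros eps Heps.
  set (eta := Rmin eps (3 * r * eps)).
  assert (Heta : 0 < eta) by (apply Rmin_glb_lt; nra).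
  destruct (ratio_near_one p r q eta Hp Hr Hq Heta (indep_of_irrational_ratio p r Hp Hr Hirr))
    as [n [m Ht]].
  assert (Heta_eps : eta <= eps) by apply Rmin_l.
  assert (Heta_r : eta <= 3 * r * eps) by apply Rmin_r.
  exists (comp (invA (word_map (word_S3_S1pow_S2 p r q n))) (word_map (word_S4_S6pow_S5 r m))).
  rewrite relative_map_S3_S1pow_S2_S4_S6pow_S5 by lra. simpl.
  set (t := r ^ (m + 1) / (q * p ^ n)) in *. repeat split.
  - exists (word_S3_S1pow_S2 p r q n), (word_S4_S6pow_S5 r m).
    split; [apply word_S3_S1pow_S2_is_word | split; [apply word_S4_S6pow_S5_is_word|]].
    now rewrite relative_map_S3_S1pow_S2_S4_S6pow_S5 by lra.
  - unfold idA. intros [= Et _]. lra.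
  - rewrite Rabs_pos_eq; lra.
  - rewrite Rabs_pos_eq by (apply Rmult_le_pos; [lra | apply Rlt_le, Rinv_0_lt_compat; lra]).
    apply (Rmult_lt_reg_r (3 * r)); [lra|].
    replace ((t - 1) / (3 * r) * (3 * r)) with (t - 1) by (field; lra). lra.
Qed.

Definition interval_length (ab : R * R) := snd ab - fst ab.
Definition total_length (L : list (R * R)) := fold_right (fun ab s => interval_length ab + s) 0 L.

Definition interval_cover (F : R -> Prop) d := exists L : list (R * R),
  Forall (fun ab => fst ab <= snd ab) L /\ total_length L <= d /\
  forall x, F x -> exists ab, In ab L /\ fst ab < x < snd ab.

Lemma total_length_cons ab l : total_length (ab :: l) = interval_length ab + total_length l.
Proof. reflexivity. Qed.

Lemma total_length_app l1 l2 : total_length (l1 ++ l2) = total_length l1 + total_length l2.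
Proof.
  induction l1 as [|ab l1 IH]; [simpl; ring|].
  rewrite <- app_comm_cons, !total_length_cons, IH. ring.
Qed.

Lemma total_length_nonneg l : Forall (fun ab => fst ab <= snd ab) l -> 0 <= total_length l.
Proof.
  induction 1 as [|ab l Hab Hl IH]; [simpl; lra|].
  rewrite total_length_cons. unfold interval_length. lra.
Qed.

Lemma total_length_map {A} (f : A -> R * R) (l : list A) d :
  (forall a, interval_length (f a) = d) -> total_length (map f l) = INR (length l) * d.
Proof.
  intros H. induction l as [|a l IH]; [simpl; ring|].
  cbn [map length]. rewrite total_length_cons, IH, H, S_INR. ring.
Qed.

Lemma partial_sum_le_total_length l : Forall (fun ab => fst ab <= snd ab) l -> forall N,
  sum_f_R0 (fun t => interval_length (nth t l (0, 0))) N <= total_length l.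
Proof.
  induction 1 as [|ab l Hab Hl IH]; intros N.
  - replace (sum_f_R0 _ N) with (sum_f_R0 (fun _ => 0) N)
      by (apply sum_eq; intros [|i] _; unfold interval_length; simpl; ring).
    simpl. induction N as [|N IHN]; simpl; lra.
  - pose proof (total_length_nonneg l Hl). rewrite total_length_cons.
    assert (interval_length ab >= 0) by (unfold interval_length; lra).
    destruct N as [|N]; [cbn [sum_f_R0 nth]; lra|].
    rewrite decomp_sum by lia. cbn [nth pred]. pose proof (IH N). lra.
Qed.

Section CountableUnion.
Variable L : nat -> list (R * R).
Hypothesis HL : forall i, Forall (fun ab => fst ab <= snd ab) (L i).

(* Padding each list with the empty interval (0,0) makes the first T lists fill at least T slots,
   so the n-th interval can be read off [intervals_upto (S n)]. *)
Definition intervals_upto T := concat (map (fun i => (0, 0) :: L i) (seq 0 T)).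

Lemma intervals_upto_S T : intervals_upto (S T) = intervals_upto T ++ (0, 0) :: L T.
Proof. unfold intervals_upto. rewrite seq_S, map_app, concat_app. simpl. now rewrite app_nil_r. Qed.

Lemma intervals_upto_length T : (T <= length (intervals_upto T))%nat.
Proof. induction T as [|T IH]; [lia|]. rewrite intervals_upto_S, length_app. simpl. lia. Qed.

Lemma intervals_upto_prefix T T' : (T <= T')%nat -> exists rest, intervals_upto T' = intervals_upto T ++ rest.
Proof.
  induction 1 as [|T' _ [rest Hrest]]; [exists []; now rewrite app_nil_r|].
  exists (rest ++ (0, 0) :: L T'). now rewrite intervals_upto_S, Hrest, app_assoc.
Qed.

Lemma intervals_upto_nth t T : (t < T)%nat ->
  nth t (intervals_upto T) (0, 0) = nth t (intervals_upto (S t)) (0, 0).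
Proof.
  intros Ht. destruct (intervals_upto_prefix (S t) T ltac:(lia)) as [rest ->].
  apply app_nth1. pose proof (intervals_upto_length (S t)). lia.
Qed.

Lemma intervals_upto_valid T : Forall (fun ab => fst ab <= snd ab) (intervals_upto T).
Proof.
  induction T as [|T IH]; [constructor|]. rewrite intervals_upto_S.
  apply Forall_app. split; [exact IH | constructor; [simpl; lra | apply HL]].
Qed.

Lemma intervals_upto_total_length eps : 0 < eps ->
  (forall i, total_length (L i) <= eps / 2 ^ S i) ->
  forall T, total_length (intervals_upto T) <= eps - eps / 2 ^ T.
Proof.
  intros Heps HLlen T. induction T as [|T IH]; [simpl; unfold intervals_upto; simpl; lra|].
  rewrite intervals_upto_S, total_length_app, total_length_cons.
  specialize (HLlen T). unfold interval_length; simpl in *.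
  assert (Hpos : 0 < 2 ^ T) by (apply pow_lt; lra).
  replace (eps / (2 * 2 ^ T)) with (eps / 2 ^ T / 2) in * by (field; lra). lra.
Qed.

End CountableUnion.

Lemma countable_union_null (E : R -> Prop) (F : nat -> R -> Prop) :
  (forall x, E x -> exists i, F i x) -> (forall i d, 0 < d -> interval_cover (F i) d) ->
  lebesgue_null E.
Proof.
  intros HE HF eps Heps.
  assert (Hch : forall i, {L | Forall (fun ab => fst ab <= snd ab) L /\
     total_length L <= eps / 2 ^ S i /\ forall x, F i x -> exists ab, In ab L /\ fst ab < x < snd ab}).
  { intro i. apply constructive_indefinite_description, HF.
    apply Rdiv_lt_0_compat; [exact Heps | apply pow_lt; lra]. }
  set (L := fun i => proj1_sig (Hch i)).
  assert (HL : forall i, Forall (fun ab => fst ab <= snd ab) (L i)) by (intro i; apply (proj2_sig (Hch i))).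
  set (I := intervals_upto L).
  exists (fun t => fst (nth t (I (S t)) (0, 0))), (fun t => snd (nth t (I (S t)) (0, 0))).
  split; [|split].
  - intro t. pose proof (intervals_upto_length L (S t)).
    apply (proj1 (Forall_forall _ _) (intervals_upto_valid L HL (S t))), nth_In. lia.
  - intros N. apply Rle_trans with (total_length (I (S N))).
    + rewrite (sum_eq _ (fun t => interval_length (nth t (I (S N)) (0, 0))))
        by (intros t Ht; unfold I; rewrite (intervals_upto_nth L t (S N)) by lia; reflexivity).
      now apply partial_sum_le_total_length, intervals_upto_valid.
    + pose proof (intervals_upto_total_length L eps Heps (fun i => proj1 (proj2 (proj2_sig (Hch i)))) (S N)).
      assert (0 < eps / 2 ^ S N) by (apply Rdiv_lt_0_compat; [exact Heps | apply pow_lt; lra]).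
      unfold I. lra.
  - intros x Hx. destruct (HE x Hx) as [i Hi].
    destruct (proj2 (proj2 (proj2_sig (Hch i))) x Hi) as [ab [Hab Hxab]].
    assert (Hin : In ab (I (S i))).
    { unfold I. rewrite intervals_upto_S. apply in_or_app. right. right. exact Hab. }
    destruct (In_nth _ _ (0, 0) Hin) as [t [Ht Et]].
    exists t. destruct (le_lt_dec t i) as [Hti | Hti].
    + unfold I in *. rewrite <- (intervals_upto_nth L t (S i)) by lia. now rewrite Et.
    + destruct (intervals_upto_prefix L (S i) (S t) ltac:(lia)) as [rest Hrest].
      unfold I in *. rewrite Hrest, app_nth1 by exact Ht. now rewrite Et.
Qed.

Lemma mismatch_small q P R x u C E D : 0 <= q <= 1/36 -> 0 < P -> 0 <= R <= P / 12 ->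
  1/3 <= x <= 1 -> 1/3 <= u <= 1 -> q * P * x = R * u ->
  Rabs (x - C) <= D -> Rabs ((1 - u) - E) <= D ->
  Rabs (q * P * C - R * (1 - E)) <= P * D / 9.
Proof.
  intros Hq HP HR Hx Hu Equ HC HE.
  apply Rabs_le_inv in HC, HE.
  replace (q * P * C - R * (1 - E)) with (- (q * P) * (x - C) - R * ((1 - u) - E))
    by (replace (q * P * C) with (q * P * x - q * P * (x - C)) by ring; rewrite Equ; ring).
  assert (HqP : 0 <= q * P <= P / 36) by (split; nra).
  apply Rabs_le. split; nra.
Qed.

Lemma mismatch_increasing q1 q2 P R C1 C2 E1 E2 : 0 <= q1 <= q2 -> q1 <= 1/36 -> 0 < P ->
  0 <= R <= P / 12 -> 11/36 <= C2 ->
  Rabs (C2 - C1) <= 2 * (q2 - q1) -> Rabs (E2 - E1) <= 2 * (q2 - q1) ->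
  P * (q2 - q1) / 12 <= (q2 * P * C2 - R * (1 - E2)) - (q1 * P * C1 - R * (1 - E1)).
Proof.
  intros Hq HqM HP HR HC2 HC HE. apply Rabs_le_inv in HC, HE.
  replace ((q2 * P * C2 - R * (1 - E2)) - (q1 * P * C1 - R * (1 - E1)))
    with (P * ((q2 - q1) * C2 + q1 * (C2 - C1)) + R * (E2 - E1)) by ring.
  assert (q1 * (C2 - C1) >= - (1/36) * (2 * (q2 - q1))) by nra.
  assert (R * (E2 - E1) >= - (P / 12) * (2 * (q2 - q1))) by nra.
  assert ((q2 - q1) * C2 >= (q2 - q1) * (11/36)) by nra.
  nra.
Qed.

Definition matches p r n m D w w' q := exists x u,
  1/3 <= x <= 1 /\ 1/3 <= u <= 1 /\ q * p ^ n * x = r ^ (m + 1) * u /\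
  Rabs (x - word_point p r q w) <= D /\ Rabs ((1 - u) - word_point p r q w') <= D.

(* The mismatch [q p^n C_w(q) - r^(m+1) (1 - C_w'(q))] is small at matching parameters but grows
   at rate at least [p^n/12] in [q], so matching parameters lie in a window of width [3D]. *)
Lemma matches_window p r n m D w w' q1 q2 : 0 < p <= 1/36 -> 0 < r <= 1/36 -> 0 <= D <= 1/36 ->
  0 <= q1 <= q2 -> q2 <= 1/36 ->
  matches p r n m D w w' q1 -> matches p r n m D w w' q2 -> q2 - q1 <= 3 * D.
Proof.
  intros Hp Hr HD Hq12 Hq2 [x1 [u1 [Hx1 [Hu1 [E1 [A1 B1]]]]]] [x2 [u2 [Hx2 [Hu2 [E2 [A2 B2]]]]]].
  set (P := p ^ n). set (R := r ^ (m + 1)). fold P R in E1, E2.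
  assert (HP : 0 < P) by (apply pow_lt; lra).
  assert (HR : 0 <= R <= P / 12).
  { assert (HR0 : 0 <= R) by (apply pow_le; lra). split; [exact HR0|].
    assert (q1 * x1 <= 1/36) by nra. assert (R * (1/3) <= R * u1) by nra. nra. }
  pose proof (mismatch_small q1 P R x1 u1 _ _ D ltac:(lra) HP HR Hx1 Hu1 E1 A1 B1) as G1.
  pose proof (mismatch_small q2 P R x2 u2 _ _ D ltac:(lra) HP HR Hx2 Hu2 E2 A2 B2) as G2.
  pose proof (word_point_lipschitz p r q1 q2 w ltac:(lra) ltac:(lra) ltac:(lra) ltac:(lra)) as Lw.
  pose proof (word_point_lipschitz p r q1 q2 w' ltac:(lra) ltac:(lra) ltac:(lra) ltac:(lra)) as Lw'.
  rewrite (Rabs_pos_eq (q2 - q1)) in Lw, Lw' by lra.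
  assert (HC2 : 11/36 <= word_point p r q2 w) by (apply Rabs_le_inv in A2; lra).
  pose proof (mismatch_increasing q1 q2 P R _ _ _ _ Hq12 ltac:(lra) HP HR HC2 Lw Lw').
  apply Rabs_le_inv in G1, G2. nra.
Qed.

Definition bad_params p r c n m q := 0 < q <= c /\
  forall k, exists w w', In w (words k) /\ In w' (words k) /\ matches p r n m (c ^ k) w w' q.

(* At level k there are 36^k pairs of words, each window has length 8 c^k, and 36 c < 1. *)
Lemma bad_params_cover p r c n m d : 0 < p <= c -> 0 < r <= c -> c < 1/36 -> 0 < d ->
  interval_cover (bad_params p r c n m) d.
Proof.
  intros Hp Hr Hc Hd.
  destruct (pow_eventually_lt (36 * c) (d / 8) ltac:(lra) ltac:(lra)) as [k0 Hk0].
  set (k := S k0). set (D := c ^ k).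
  assert (HD : 0 < D <= 1/36).
  { split; [apply pow_lt; lra|]. unfold D, k. simpl.
    pose proof (pow_le_one c k0 ltac:(lra)). pose proof (pow_le c k0 ltac:(lra)). nra. }
  assert (HkD : 36 ^ k * D < d / 8).
  { unfold D. rewrite <- Rpow_mult_distr. apply Rle_lt_trans with ((36 * c) ^ k0); [|exact Hk0].
    unfold k. simpl. pose proof (pow_le (36 * c) k0 ltac:(lra)). nra. }
  set (window := fun (ww : list nat * list nat) q =>
    0 <= q <= c /\ matches p r n m D (fst ww) (snd ww) q).
  set (center := fun ww => epsilon (inhabits 0) (window ww)).
  exists (map (fun ww => (center ww - 4 * D, center ww + 4 * D)) (list_prod (words k) (words k))).
  split; [|split].
  - apply Forall_forall. intros ab Hab. apply in_map_iff in Hab.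
    destruct Hab as [ww [<- _]]. simpl. lra.
  - rewrite (total_length_map _ _ (8 * D)) by (intros; unfold interval_length; simpl; ring).
    rewrite length_prod, words_length, mult_INR, pow_INR.
    replace (INR 6) with 6 by (simpl; ring).
    replace (6 ^ k * 6 ^ k * (8 * D)) with (8 * ((6 * 6) ^ k * D)) by (rewrite Rpow_mult_distr; ring).
    replace (6 * 6) with 36 by ring. lra.
  - intros q [Hq Hk]. destruct (Hk k) as [w [w' [Hw [Hw' Hm]]]].
    exists (center (w, w') - 4 * D, center (w, w') + 4 * D). split.
    + apply (in_map (fun ww => (center ww - 4 * D, center ww + 4 * D))). now apply in_prod.
    + assert (Hq0 : window (w, w') q) by (split; [lra | exact Hm]).
      destruct (epsilon_spec (inhabits 0) (window (w, w')) (ex_intro _ q Hq0)) as [Hc0 Hm0].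
      unfold center; simpl. set (q0 := epsilon _ _) in *.
      destruct (Rle_or_lt q q0).
      * assert (q0 - q <= 3 * D) by (apply (matches_window p r n m D w w'); auto; lra). lra.
      * assert (q - q0 <= 3 * D) by (apply (matches_window p r n m D w w'); auto; lra). lra.
Qed.

Definition level p r N := Rmax (Rmax p r) (1/36 - / (36 * (INR N + 2))).

Lemma level_bounds p r N : p < 1/36 -> r < 1/36 ->
  p <= level p r N /\ r <= level p r N /\ level p r N < 1/36.
Proof.
  intros Hp Hr. unfold level. pose proof (pos_INR N).
  assert (0 < / (36 * (INR N + 2))) by (apply Rinv_0_lt_compat; lra).
  pose proof (Rmax_l (Rmax p r) (1/36 - / (36 * (INR N + 2)))).
  pose proof (Rmax_r (Rmax p r) (1/36 - / (36 * (INR N + 2)))).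
  pose proof (Rmax_l p r). pose proof (Rmax_r p r).
  repeat split; try lra. repeat apply Rmax_lub_lt; lra.
Qed.

Lemma exists_level p r q : q < 1/36 -> exists N, q <= level p r N.
Proof.
  intros Hq. destruct (nat_floor (/ (1 - 36 * q))) as [N [_ HN]].
  { apply Rlt_le, Rinv_0_lt_compat; lra. }
  exists N. eapply Rle_trans; [|apply Rmax_r].
  assert (/ (36 * (INR N + 2)) <= (1 - 36 * q) / 36).
  { replace ((1 - 36 * q) / 36) with (/ (36 * / (1 - 36 * q))) by (field; lra).
    apply Rinv_le_contravar; [|lra].
    apply Rmult_lt_0_compat; [lra | apply Rinv_0_lt_compat; lra]. }
  lra.
Qed.

Lemma extra_intersection_point_bad_params p r q K y :
  0 < p < 1/36 -> 0 < r < 1/36 -> 0 < q < 1/36 -> is_attractor (sysS p r q) K ->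
  piece (sysS p r q) K 2 y -> piece (sysS p r q) K 3 y -> y <> 1/2 ->
  exists N n m, bad_params p r (level p r N) n m q.
Proof.
  intros Hp Hr Hq HK H2 H3 Hy.
  destruct (pieces_3_4_other_point p r q Hp Hr Hq K HK y H2 H3 Hy)
    as [n [m [x [u [Hx [Hu [E [HKx HKu]]]]]]]].
  destruct (exists_level p r q ltac:(lra)) as [N HN].
  destruct (level_bounds p r N ltac:(lra) ltac:(lra)) as [Hpc [Hrc Hc]].
  exists N, n, m. split; [lra|]. intro k.
  destruct (attractor_near_word_point p r q Hp Hr Hq K HK _ k x Hpc Hrc HN HKx) as [w [Hw Aw]].
  destruct (attractor_near_word_point p r q Hp Hr Hq K HK _ k (1 - u) Hpc Hrc HN HKu) as [w' [Hw' Aw']].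
  exists w, w'. repeat split; auto. exists x, u. auto.
Qed.

Theorem mainTheorem14 (p r : R) :
  0 < p < 1/36 -> 0 < r < 1/36 ->
  ~ (exists m n : Z, n <> 0%Z /\ ln p / ln r = IZR m / IZR n) ->
  ae_on 0 (1/36) (fun q =>
    forall K : R -> Prop, is_attractor (sysS p r q) K ->
      (forall y, (piece (sysS p r q) K 2 y /\ piece (sysS p r q) K 3 y) <-> y = 1/2) /\
      (forall i j : nat, (i < 6)%nat -> (j < 6)%nat -> i <> j ->
         ~ ((i = 2%nat /\ j = 3%nat) \/ (i = 3%nat /\ j = 2%nat)) ->
         forall y, ~ (piece (sysS p r q) K i y /\ piece (sysS p r q) K j y)) /\
      ~ WSP (sysS p r q)).
Proof.
  intros Hp Hr Hirr.
  apply (countable_union_null _ (fun i =>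
    let '(N, nm) := Cantor.of_nat i in let '(n, m) := Cantor.of_nat nm in
    bad_params p r (level p r N) n m)).
  - intros q [Hq Hnot]. apply NNPP. intro Hgood. apply Hnot. intros K HK.
    split; [|split].
    + intro y. split; [intros [H2 H3] | intros ->; now apply half_in_pieces_3_4].
      apply NNPP. intro Hy. apply Hgood.
      destruct (extra_intersection_point_bad_params p r q K y Hp Hr Hq HK H2 H3 Hy) as [N [n [m Hbad]]].
      exists (Cantor.to_nat (N, Cantor.to_nat (n, m))). now rewrite !Cantor.cancel_of_to.
    + now apply pieces_disjoint.
    + apply not_WSP; auto; lra.
  - intros i d Hd. destruct (Cantor.of_nat i) as [N nm]. destruct (Cantor.of_nat nm) as [n m].
    destruct (level_bounds p r N ltac:(lra) ltac:(lra)) as [Hpc [Hrc Hc]].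
    apply bad_params_cover; auto; lra.
Qed.
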